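(* Let $(d,p)\in\{(6,1),(10,2),(13,3),(14,3),(17,4)\}$. Then the function $\varphi$ has a unique maximum on $K$, and it is attained at the point $\mathbf{z}^*$, which lies in the interior of $K$.
   Context: Let $\tau_j=\binom{d}{p}\binom{p}{j}\binom{d-p}{p-j}$ for $0\le j\le p$. Points of $\mathbb{R}^{4p+1}$ are written $\mathbf{z}=(z,(z_{j00},z_{j01},z_{j10},z_{j11})_{j\in[p]})$, and we set $z_{0\alpha\alpha}=z-\sum_{j\in[p]}z_{j\alpha\alpha}$ for $\alpha\in\{0,1\}$ and $z_{0\alpha\beta}=\frac12-z-\sum_{j\in[p]}z_{j\alpha\beta}$ for $\alpha\ne\beta$. Let $K\subset\mathbb{R}^{4p+1}$ be the set of $\mathbf{z}$ with $0\le z\le\frac12$ and $z_{j\alpha\beta}\ge0$ for all $0\le j\le p$, $\alpha,\beta\in\{0,1\}$. Define $A(\mathbf{z})=p+(d-4p)z+\sum_{j\in[p]}j(z_{j00}+z_{j11}-z_{j01}-z_{j10})$, $B(\mathbf{z})=\frac d2-A(\mathbf{z})$, and $$\varphi(\mathbf{z})=A\log A+B\log B+\sum_{\substack{0\le j\le p\\ \alpha,\beta\in\{0,1\}}}\bigl(z_{j\alpha\beta}\log\tau_j-z_{j\alpha\beta}\log z_{j\alpha\beta}\bigr),$$ with the convention $0\log0=0$ (so $\varphi$ is continuous on $K$). The point $\mathbf{z}^*$ has $z^*=\frac14$ and $z^*_{j\alpha\beta}=\frac{\tau_j}{4\binom{d}{p}^2}$ for all $j\in[p]$, $\alpha,\beta\in\{0,1\}$.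 *)

From HB Require Import structures.
From mathcomp Require Import all_boot all_order all_algebra.
From mathcomp Require Import all_classical all_reals all_analysis.
Set Implicit Arguments. Unset Strict Implicit. Unset Printing Implicit Defensive.
Import Order.TTheory GRing.Theory Num.Theory.
Local Open Scope ring_scope.

Section Defs.
Variable R : realType.
Variables d p : nat.

(* A kpoint of R^{4p+1}: (z, (z_{j a b})) with j in [p] encoded by i : 'I_p
   standing for j = i+1, and bits a, b in {0,1} encoded as false/true. *)
Definition kpoint := (R * {ffun 'I_p * bool * bool -> R})%type.

Definition xlnx (x : R) : R := if x == 0 then 0 else x * ln x.

Definition tau (j : nat) : R := ('C(d, p) * 'C(p, j) * 'C(d - p, p - j))%:R.

Definition z0 (w : kpoint) (a b : bool) : R :=
  if a == b then w.1 - \sum_(i < p) w.2 (i, a, b)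
  else 1 / 2 - w.1 - \sum_(i < p) w.2 (i, a, b).

Definition inK (w : kpoint) : Prop :=
  [/\ 0 <= w.1, w.1 <= 1 / 2,
      (forall a b, 0 <= z0 w a b) &
      (forall i a b, 0 <= w.2 (i, a, b))].

Definition in_interior_K (w : kpoint) : Prop :=
  [/\ 0 < w.1, w.1 < 1 / 2,
      (forall a b, 0 < z0 w a b) &
      (forall i a b, 0 < w.2 (i, a, b))].

Definition Aval (w : kpoint) : R :=
  p%:R + (d%:R - 4 * p%:R) * w.1 +
  \sum_(i < p) (i.+1)%:R *
     (w.2 (i, false, false) + w.2 (i, true, true)
      - w.2 (i, false, true) - w.2 (i, true, false)).

Definition Bval (w : kpoint) : R := d%:R / 2 - Aval w.

Definition phi (w : kpoint) : R :=
  xlnx (Aval w) + xlnx (Bval w)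
  + \sum_(a : bool) \sum_(b : bool) (z0 w a b * ln (tau 0) - xlnx (z0 w a b))
  + \sum_(i < p) \sum_(a : bool) \sum_(b : bool)
        (w.2 (i, a, b) * ln (tau i.+1) - xlnx (w.2 (i, a, b))).

Definition zstar : kpoint :=
  (1 / 4, [ffun k : 'I_p * bool * bool =>
             tau (k.1.1).+1 / (4 * ('C(d, p)%:R) ^+ 2)]).

End Defs.

From Stdlib Require Import BinPosDef.
From HB Require Import structures.
From mathcomp Require Import all_boot all_order all_algebra.
From mathcomp Require Import all_classical all_reals all_analysis.
From mathcomp Require Import ring lra zify.
Import Order.TTheory GRing.Theory Num.Theory.
Set Implicit Arguments.
Unset Strict Implicit.
Unset Printing Implicit Defensive.
Local Open Scope ring_scope.

(* Gibbs' inequality bounds phi on K, for every s > 0, by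
     xlnx A + xlnx B + ln C(d,p) + ln H(s) - 2 A ln s,
   where H(s) is the sum over all coordinates z_{jab} of (tau_j / C(d,p)) s^e,
   e being the coefficient of z_{jab} in 2A; equality holds exactly at the
   normalised weights.  At A = d/4 and s = 1 these weights are zstar, so phi zstar
   equals the bound there.  If A <> d/4, taking s^2 = A/B turns the bound into
   (d/2) ln (d/2) + ln C(d,p) + ln H(s) - (d/2) ln (1 + s^2), which lies below
   phi zstar as soon as 2^d H(s)^2 < (4 C(d,p))^2 (1 + s^2)^d for s <> 1; the
   boundary cases A = 0 and B = 0 are handled at s = 1/4 and s = 4, which the
   symmetry s <-> 1/s of H exchanges.  For the five listed (d,p) the
   polynomial inequality is certified by an explicit positive combination of
   the (s - 1)^(2k) s^(d-k). *)

Section Gibbs.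
Variable R : realType.

Lemma ln_le_subr1 (x : R) : 0 < x -> ln x <= x - 1 ?= iff (x == 1).
Proof.
move=> x0; apply/leifP; have [->|x1] := eqVneq x 1; first by rewrite ln1 subrr.
rewrite -ltr_expR lnK ?posrE // -[X in X < _](subrK 1 x) addrC.
by apply: expR_gt1Dx; rewrite subr_eq0.
Qed.

Lemma xlnx_gibbs (z m M : R) : 0 <= z -> 0 < m -> 0 < M ->
  z * ln m - xlnx z <= z * ln M + m / M - z ?= iff (z == m / M).
Proof.
move=> z0 m0 M0; rewrite /xlnx; have [->|zn0] := eqVneq z 0.
  rewrite !mul0r subrr subr0 add0r; apply/leifP.
  by rewrite eq_sym mulf_eq0 invr_eq0 !gt_eqF //= divr_gt0.
have zpos : 0 < z by rewrite lt_def zn0.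
have q0 : 0 < m / (M * z) by rewrite divr_gt0 // mulr_gt0.
have lnq : ln (m / (M * z)) = ln m - ln M - ln z.
  by rewrite ln_div ?posrE ?mulr_gt0 // lnM ?posrE // opprD addrA.
have -> : z * ln m - z * ln z = z * ln (m / (M * z)) + z * ln M.
  by rewrite lnq; ring.
have -> : z * ln M + m / M - z = z * (m / (M * z) - 1) + z * ln M.
  by field; rewrite !gt_eqF.
have -> : (z == m / M) = (m / (M * z) == 1).
  rewrite invfM mulrA eq_sym; apply/eqP/eqP => [->|/divr1_eq //].
  by rewrite divff // gt_eqF.
rewrite (mono_leif (lerD2r _)) (mono_leif (ler_pM2l zpos)).
exact: ln_le_subr1.
Qed.

Lemma xlnxE (x : R) : xlnx x = x * ln x.
Proof. by rewrite /xlnx; case: eqP => [->|]; rewrite ?mul0r. Qed.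

End Gibbs.

Section GibbsBound.
Variables (R : realType) (d p : nat).
Hypothesis le2p_d : (2 * p <= d)%N.

Local Notation kpoint := (kpoint R p).
Local Notation index := ('I_p.+1 * bool * bool)%type.
Local Notation C := ('C(d, p)%:R : R).

(* The coordinates z_{jab} of the paper, indexed by (j, a, b); those with
   j = 0 are the dependent ones z0. *)
Definition coord (w : kpoint) (k : index) : R :=
  let: (j, a, b) := k in
  if unlift ord0 j is Some i then w.2 (i, a, b) else z0 w a b.

Definition expo (k : index) : nat :=
  if k.1.2 == k.2 then (d - 2 * p + 2 * k.1.1)%N else (2 * p - 2 * k.1.1)%N.

Definition hcoef (j : nat) : R := ('C(p, j) * 'C(d - p, p - j))%:R.

Definition weight (s : R) (k : index) : R := hcoef k.1.1 * s ^+ expo k.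

Definition partition (s : R) : R := \sum_k weight s k.

Lemma sum_index (F : index -> R) :
  \sum_k F k = \sum_(j < p.+1) \sum_a \sum_b F (j, a, b).
Proof.
rewrite (pair_bigA _ (fun j a => \sum_b F (j, a, b))) pair_bigA.
by apply: eq_bigr => -[[]].
Qed.

Lemma sum_bool2 (F : bool -> bool -> R) :
  \sum_a \sum_b F a b = F true true + F true false + F false true + F false false.
Proof. by rewrite !big_bool /= !addrA. Qed.

Lemma sum_coord (w : kpoint) (F : index -> R -> R) :
  \sum_k F k (coord w k) =
  F (ord0, true, true) (z0 w true true) + F (ord0, true, false) (z0 w true false)
  + F (ord0, false, true) (z0 w false true) + F (ord0, false, false) (z0 w false false)
  + \sum_(i < p) (F (lift ord0 i, true, true) (w.2 (i, true, true))
                  + F (lift ord0 i, true, false) (w.2 (i, true, false))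
                  + F (lift ord0 i, false, true) (w.2 (i, false, true))
                  + F (lift ord0 i, false, false) (w.2 (i, false, false))).
Proof.
rewrite sum_index big_ord_recl sum_bool2 /= unlift_none; congr (_ + _).
by apply: eq_bigr => i _; rewrite sum_bool2 /= liftK.
Qed.

Lemma expoE (k : index) : (expo k)%:R =
  if k.1.2 == k.2 then d%:R - 2 * p%:R + 2 * (k.1.1)%:R
  else 2 * p%:R - 2 * (k.1.1)%:R :> R.
Proof.
have jp : (k.1.1 <= p)%N by rewrite -ltnS.
by rewrite /expo; case: ifP => _; rewrite ?natrD natrB ?natrM //; first [ring | lia].
Qed.

Lemma sum_coord1 (w : kpoint) : \sum_k coord w k = 1.
Proof. by rewrite (sum_coord w (fun _ x => x)) /z0 /= !big_split /=; lra. Qed.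

Lemma sum_coord_expo (w : kpoint) :
  \sum_k coord w k * (expo k)%:R = 2 * Aval d w.
Proof.
rewrite (sum_coord w (fun k x => x * (expo k)%:R)).
rewrite (eq_bigr (fun i : 'I_p =>
     (d%:R - 2 * p%:R) * w.2 (i, true, true) + 2 * p%:R * w.2 (i, true, false)
   + 2 * p%:R * w.2 (i, false, true) + (d%:R - 2 * p%:R) * w.2 (i, false, false)
   + 2 * ((i.+1)%:R * (w.2 (i, false, false) + w.2 (i, true, true)
                        - w.2 (i, false, true) - w.2 (i, true, false))))); last first.
  by move=> i _; rewrite !expoE !lift0 /=; ring.
by rewrite /Aval /z0 !expoE /= !big_split /= -!mulr_sumr; lra.
Qed.

Lemma coord0 (w : kpoint) a b : coord w (ord0, a, b) = z0 w a b.
Proof. by rewrite /= unlift_none. Qed.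

Lemma coord_lift (w : kpoint) i a b : coord w (lift ord0 i, a, b) = w.2 (i, a, b).
Proof. by rewrite /= liftK. Qed.

Lemma coord_ge0 (w : kpoint) : inK w -> forall k, 0 <= coord w k.
Proof.
case=> _ _ z0_ge0 w2_ge0 -[[j a] b].
by case: (unliftP ord0 j) => [i ->|->]; rewrite ?coord_lift ?coord0.
Qed.

Lemma eq_kpoint_coord (w w' : kpoint) :
  (forall k, coord w k = coord w' k) -> w = w'.
Proof.
move=> ww'; have w2 : w.2 = w'.2.
  by apply/ffunP => -[[i a] b]; rewrite -!coord_lift.
have := ww' (ord0, true, true); rewrite !coord0 /z0 /= w2 => /addIr w1.
by case: w w' w1 w2 {ww'} => [? ?] [? ?] /= -> ->.
Qed.

Lemma Aval_bounds (w : kpoint) : inK w -> 0 <= Aval d w <= d%:R / 2.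
Proof.
move=> /coord_ge0 cge0.
have : 0 <= \sum_k coord w k * (expo k)%:R <= \sum_k coord w k * d%:R.
  apply/andP; split; first by apply: sumr_ge0 => k _; rewrite mulr_ge0.
  apply: ler_sum => -[[j a] b] _; rewrite ler_wpM2l // ler_nat /expo /=.
  by have := ltn_ord j; case: ifP => _; lia.
by rewrite sum_coord_expo -mulr_suml sum_coord1; lra.
Qed.

Lemma hcoef_gt0 (j : 'I_p.+1) : 0 < hcoef j.
Proof. by rewrite ltr0n muln_gt0 !bin_gt0 -ltnS ltn_ord /=; lia. Qed.

Lemma tau_hcoef j : tau R d p j = C * hcoef j.
Proof. by rewrite /tau /hcoef -natrM mulnA. Qed.

Lemma sum_hcoef : \sum_(j < p.+1) hcoef j = C.
Proof.
rewrite -natr_sum binomial.Vandermonde subnKC //.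
by apply: leq_trans le2p_d; rewrite leq_pmull.
Qed.

Lemma C_gt0 : 0 < C.
Proof. by rewrite ltr0n bin_gt0; lia. Qed.

Lemma weight_gt0 s k : 0 < s -> 0 < weight s k.
Proof. by move=> s0; rewrite mulr_gt0 ?exprn_gt0 ?hcoef_gt0. Qed.

Lemma partition_gt0 s : 0 < s -> 0 < partition s.
Proof.
move=> s0; rewrite /partition (bigD1 (ord0, true, true)) //=.
by rewrite ltr_wpDr ?weight_gt0 // sumr_ge0 // => k _; rewrite ltW ?weight_gt0.
Qed.

Lemma partition1 : partition 1 = 4 * C.
Proof.
rewrite /partition sum_index -sum_hcoef mulr_sumr.
by apply: eq_bigr => j _; rewrite sum_bool2 /weight !expr1n !mulr1; ring.
Qed.

Lemma partitionE s : partition s =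
  \sum_(j < p.+1) hcoef j * (s ^+ (d - 2 * p + 2 * j) + s ^+ (2 * p - 2 * j)) *+ 2.
Proof.
rewrite /partition sum_index; apply: eq_bigr => j _.
by rewrite sum_bool2 /weight /expo /=; ring.
Qed.

Lemma partitionV s : 0 < s -> partition s^-1 = partition s / s ^+ d.
Proof.
move=> s0; rewrite !partitionE mulr_suml; apply: eq_bigr => j _.
have jp : (2 * j <= 2 * p)%N by rewrite leq_mul2l -ltnS ltn_ord.
have -> : (d - 2 * p + 2 * j = d - (2 * p - 2 * j))%N by lia.
rewrite !exprVn !exprB ?unitfE ?gt_eqF ?exprn_gt0 //; last by lia.
by field; rewrite ?gt_eqF ?exprn_gt0.
Qed.

Lemma phiE (w : kpoint) : phi d w = xlnx (Aval d w) + xlnx (Bval d w)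
  + \sum_k (coord w k * ln (tau R d p k.1.1) - xlnx (coord w k)).
Proof.
rewrite (sum_coord w (fun k x => x * ln (tau R d p k.1.1) - xlnx x)) /phi sum_bool2.
under eq_bigr => i _ do rewrite sum_bool2.
by rewrite !addrA; congr (_ + _); apply: eq_bigr => i _; rewrite !addrA.
Qed.

Definition gibbs_bound (A s : R) : R :=
  xlnx A + xlnx (d%:R / 2 - A) + ln C + ln (partition s) - 2 * A * ln s.

Lemma phi_le_gibbs_bound (w : kpoint) s : inK w -> 0 < s ->
  phi d w <= gibbs_bound (Aval d w) s
  ?= iff [forall k, coord w k == weight s k / partition s].
Proof.
move=> /coord_ge0 cge0 s0; have M0 := partition_gt0 s0; have C0 := C_gt0.
set M := partition s.
have bound_sumE : \sum_k (coord w k * (ln C - (expo k)%:R * ln s)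
    + (coord w k * ln M + weight s k / M - coord w k))
    = ln C + ln M - 2 * Aval d w * ln s.
  rewrite (eq_bigr (fun k => (ln C + ln M) * coord w k
      - ln s * (coord w k * (expo k)%:R) + (weight s k / M - coord w k))); last first.
    by move=> k _; ring.
  rewrite big_split sumrB /= sumrB -!mulr_sumr -mulr_suml sum_coord1 sum_coord_expo.
  by rewrite -/(partition s) -/M divff ?gt_eqF //; ring.
have -> : gibbs_bound (Aval d w) s = xlnx (Aval d w) + xlnx (Bval d w)
    + \sum_k (coord w k * (ln C - (expo k)%:R * ln s)
              + (coord w k * ln M + weight s k / M - coord w k)).
  by rewrite bound_sumE /gibbs_bound /Bval -/M; ring.
rewrite phiE (mono_leif (lerD2l _)); apply: leif_sum => k _.
have -> : coord w k * ln (tau R d p k.1.1) - xlnx (coord w k) =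
    coord w k * (ln C - (expo k)%:R * ln s)
    + (coord w k * ln (weight s k) - xlnx (coord w k)).
  rewrite tau_hcoef !lnM ?posrE ?hcoef_gt0 ?exprn_gt0 // lnXn // mulr_natl; ring.
by rewrite (mono_leif (lerD2l _)); apply: xlnx_gibbs; rewrite ?weight_gt0.
Qed.

Lemma coord_zstar k : coord (zstar R d p) k = hcoef k.1.1 / (4 * C).
Proof.
have C0 := C_gt0.
have zstar2 i a b : (zstar R d p).2 (i, a, b) = hcoef i.+1 / (4 * C).
  by rewrite ffunE tau_hcoef; field; rewrite gt_eqF.
case: k => -[j a] b; case: (unliftP ord0 j) => [i ->|->].
  by rewrite coord_lift zstar2 lift0.
have sum_rest : \sum_(i < p) (zstar R d p).2 (i, a, b) = (C - hcoef 0) / (4 * C).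
  rewrite (eq_bigr _ (fun i _ => zstar2 i a b)) -mulr_suml; congr (_ / _).
  by rewrite -sum_hcoef big_ord_recl addrC addKr.
by rewrite coord0 /z0 sum_rest /=; case: (a == b); field; rewrite gt_eqF.
Qed.

Lemma in_interior_zstar : in_interior_K (zstar R d p).
Proof.
have pos k : 0 < coord (zstar R d p) k.
  by rewrite coord_zstar divr_gt0 ?mulr_gt0 ?hcoef_gt0 ?C_gt0.
split; [by rewrite /=; lra | by rewrite /=; lra | move=> a b | move=> i a b].
  by rewrite -coord0.
by rewrite -coord_lift.
Qed.

Lemma inK_zstar : inK (zstar R d p).
Proof.
case: in_interior_zstar => ? ? z0_gt0 w2_gt0.
by split; rewrite ?ltW // => *; rewrite ltW.
Qed.

Lemma Aval_zstar : Aval d (zstar R d p) = d%:R / 4.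
Proof.
rewrite /Aval big1 => [/=|i _]; first by field.
by rewrite -!coord_lift !coord_zstar; ring.
Qed.

Lemma phi_zstar : phi d (zstar R d p) = gibbs_bound (d%:R / 4) 1.
Proof.
apply/eqP; rewrite -Aval_zstar (eq_leif (phi_le_gibbs_bound inK_zstar ltr01)).
by apply/forallP => k; rewrite coord_zstar /weight expr1n mulr1 partition1.
Qed.

Lemma gibbs_bound_sym A s : 0 < s ->
  gibbs_bound (d%:R / 2 - A) s^-1 = gibbs_bound A s.
Proof.
move=> s0; rewrite /gibbs_bound partitionV // subKr.
rewrite ln_div ?posrE ?partition_gt0 ?exprn_gt0 // lnXn // lnV ?posrE //.
by rewrite -(mulr_natl (ln s)); field.
Qed.

Lemma gibbs_bound_quarter : 0 < d%:R :> R ->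
  gibbs_bound (d%:R / 4) 1 = d%:R / 2 * (ln (d%:R / 2) - ln 2) + ln C + ln (4 * C).
Proof.
move=> d0; rewrite /gibbs_bound partition1 ln1 !xlnxE.
have -> : d%:R / 2 - d%:R / 4 = d%:R / 4 :> R by field.
have -> : ln (d%:R / 4) = ln (d%:R / 2) - ln 2 :> R.
  by rewrite -ln_div ?posrE ?divr_gt0 //; congr (ln _); field.
by field.
Qed.

Lemma gibbs_bound_opt A : 0 < A < d%:R / 2 ->
  let s := Num.sqrt (A / (d%:R / 2 - A)) in
  gibbs_bound A s = d%:R / 2 * (ln (d%:R / 2) - ln (1 + s ^+ 2)) + ln C + ln (partition s).
Proof.
case/andP=> A0 Ad s; set B := d%:R / 2 - A.
have B0 : 0 < B by rewrite subr_gt0.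
have AB : d%:R / 2 = A + B by rewrite /B; ring.
have d0 : 0 < d%:R / 2 :> R by rewrite AB addr_gt0.
have s2 : s ^+ 2 = A / B by rewrite sqr_sqrtr // divr_ge0 // ltW.
have s0 : 0 < s by rewrite sqrtr_gt0 divr_gt0.
have ln_s : 2 * ln s = ln A - ln B.
  by rewrite -ln_div ?posrE // -s2 lnXn // mulr_natl.
have ln_1s2 : ln (1 + s ^+ 2) = ln (d%:R / 2) - ln B.
  have -> : 1 + s ^+ 2 = d%:R / 2 / B by rewrite s2 AB; field; rewrite gt_eqF.
  by rewrite ln_div ?posrE.
rewrite /gibbs_bound !xlnxE ln_1s2 -/B (_ : 2 * A * ln s = A * (2 * ln s)); last by ring.
by rewrite ln_s AB; ring.
Qed.

Lemma ln_partition_lt s t : 0 < s -> 0 < t ->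
  2 ^+ d * partition s ^+ 2 < (4 * C) ^+ 2 * t ^+ d ->
  ln (partition s) + d%:R / 2 * ln 2 < ln (4 * C) + d%:R / 2 * ln t.
Proof.
move=> s0 t0; have H0 := partition_gt0 s0; have C0 := C_gt0.
have C4 : 0 < 4 * C by rewrite mulr_gt0.
rewrite -ltr_ln ?posrE; last 2 first.
- by rewrite mulr_gt0 ?exprn_gt0.
- by rewrite mulr_gt0 ?exprn_gt0.
rewrite !lnM ?posrE ?exprn_gt0 // !lnXn // -(mulr_natl (ln 2)) -(mulr_natl (ln t)).
lra.
Qed.

Hypothesis partition_gap : forall s, 0 < s -> s != 1 ->
  2 ^+ d * partition s ^+ 2 < (4 * C) ^+ 2 * (1 + s ^+ 2) ^+ d.
Hypothesis partition_edge : 2 ^+ d * partition 4^-1 ^+ 2 < (4 * C) ^+ 2.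

Lemma gibbs_bound_edge : 0 < d%:R :> R -> gibbs_bound 0 4^-1 < gibbs_bound (d%:R / 4) 1.
Proof.
move=> d0; rewrite gibbs_bound_quarter //.
have := ln_partition_lt (t := 1) _ ltr01; rewrite expr1n mulr1 ln1 mulr0 addr0.
move=> /(_ _ _ partition_edge) lt_edge.
by rewrite /gibbs_bound !xlnxE subr0; lra.
Qed.

Lemma gibbs_bound_interior A : 0 < A < d%:R / 2 -> A != d%:R / 4 ->
  exists2 s, 0 < s & gibbs_bound A s < gibbs_bound (d%:R / 4) 1.
Proof.
move=> /[dup] /andP[A0 Ad] /gibbs_bound_opt opt Aq.
pose s := Num.sqrt (A / (d%:R / 2 - A)).
have B0 : 0 < d%:R / 2 - A by rewrite subr_gt0.
have AB0 : 0 <= A / (d%:R / 2 - A) by rewrite divr_ge0 ?ltW.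
have s0 : 0 < s by rewrite sqrtr_gt0 divr_gt0.
have s1 : s != 1.
  apply: contra_neq Aq => s_eq1.
  have /divr1_eq : A / (d%:R / 2 - A) = 1 by rewrite -(sqr_sqrtr AB0) -/s s_eq1 expr1n.
  lra.
exists s => //; rewrite opt gibbs_bound_quarter; last lra.
have := ln_partition_lt s0 _ (partition_gap s0 s1).
by rewrite ltr_pwDl ?exprn_ge0 ?ltW // => /(_ isT); lra.
Qed.

Lemma gibbs_bound_lt A : 0 <= A <= d%:R / 2 -> A != d%:R / 4 ->
  exists2 s, 0 < s & gibbs_bound A s < gibbs_bound (d%:R / 4) 1.
Proof.
move=> /andP[A0 Ad] Aq.
have d0 : 0 < d%:R :> R.
  rewrite lt_def ler0n andbT; apply: contra_neq Aq => d_eq0.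
  by rewrite d_eq0 in Ad *; lra.
have [->|A_ne0] := eqVneq A 0; first by exists 4^-1; rewrite ?gibbs_bound_edge.
have [->|A_ne_half] := eqVneq A (d%:R / 2).
  have q0 : 0 < 4^-1 :> R by rewrite invr_gt0.
  exists 4 => //; have := gibbs_bound_sym 0 q0; rewrite subr0 invrK => ->.
  exact: gibbs_bound_edge.
apply: gibbs_bound_interior => //.
by rewrite !lt_def A_ne0 eq_sym A_ne_half A0 Ad.
Qed.

Theorem phi_argmax :
  [/\ inK (zstar R d p),
      (forall w : kpoint, inK w -> w <> zstar R d p ->
         phi d w < phi d (zstar R d p)) &
      in_interior_K (zstar R d p)].
Proof.
split; [exact: inK_zstar | move=> w wK w_ne | exact: in_interior_zstar].
rewrite phi_zstar; have [Aq|Aq] := eqVneq (Aval d w) (d%:R / 4); last first.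
  have [s s0 lt_s] := gibbs_bound_lt (Aval_bounds wK) Aq.
  exact: le_lt_trans (phi_le_gibbs_bound wK s0) lt_s.
rewrite -Aq (lt_leif (phi_le_gibbs_bound wK ltr01)).
apply/negP => /forallP coord_eq; apply: w_ne; apply: eq_kpoint_coord => k.
by rewrite coord_zstar (eqP (coord_eq k)) /weight expr1n mulr1 partition1.
Qed.

End GibbsBound.

(* Certificate coefficients are binary [positive]s: ring numerals are unary
   naturals. *)
Fixpoint posr {R : realType} (q : positive) : R :=
  match q with
  | xH => 1
  | xO q => 2 * posr q
  | xI q => 2 * posr q + 1
  end.

(* [cert_sum s n [:: c_1; ...; c_m]] is the sum of the c_k (s-1)^(2k) s^(n-k). *)
Fixpoint cert_sum {R : realType} (s : R) (n : nat) (c : seq positive) : R :=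
  if c is q :: c then (s - 1) ^+ 2 * (posr q * s ^+ n.-1 + cert_sum s n.-1 c)
  else 0.

Section Certificates.
Variable R : realType.

Lemma posr_gt0 q : 0 < posr q :> R.
Proof. by elim: q => [q ih|q ih|] /=; rewrite ?ltr_pwDl ?mulr_gt0. Qed.

Lemma cert_sum_ge0 (s : R) n c : 0 < s -> 0 <= cert_sum s n c.
Proof.
move=> s0; elim: c n => [|q c ih] n //=.
by rewrite mulr_ge0 ?sqr_ge0 // addr_ge0 ?ih // mulr_ge0 ?exprn_ge0 ?ltW ?posr_gt0.
Qed.

Lemma lt_of_cert n (g : positive) c (x y s : R) : 0 < s -> s != 1 -> (0 < size c)%N ->
  y - x = posr g * cert_sum s n c -> x < y.
Proof.
move=> s0 s1; case: c => [|q c] // _ gap; rewrite -subr_gt0 gap mulr_gt0 ?posr_gt0 //=.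
rewrite mulr_gt0 ?exprn_even_gt0 ?subr_eq0 //.
by rewrite ltr_wpDr ?cert_sum_ge0 // mulr_gt0 ?posr_gt0 ?exprn_gt0.
Qed.

End Certificates.
Arguments lt_of_cert {R} n g c {x y} s.

Ltac eval_nat := repeat match goal with
 | |- context [ GRing.natmul _ ?n ] =>
   lazymatch n with O => fail | S _ => fail | _ =>
     let m := eval vm_compute in n in change n with m end
 | |- context [ GRing.exp _ ?n ] =>
   lazymatch n with O => fail | S _ => fail | _ =>
     let m := eval vm_compute in n in change n with m end
 end.

Ltac expand_partition :=
  rewrite partitionE !big_ord_recr big_ord0 /hcoef /=; eval_nat.

Section Cases.
Variable R : realType.

(* (4 C)^2 (1 + s^2)^d - 2^d H(s)^2 is palindromic of degree 2d with a double
   root at 1, hence s^d times a polynomial in (s-1)^2/s vanishing at 0; the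
   coefficients of that polynomial, divided by their common factor, are the
   certificates below. *)
Lemma partition_gap_6_1 (s : R) : 0 < s -> s != 1 ->
  2 ^+ 6 * partition 6 1 s ^+ 2 < (4 * 'C(6, 1)%:R) ^+ 2 * (1 + s ^+ 2) ^+ 6.
Proof.
move=> s0 s1; apply: (lt_of_cert 6 64
  [:: 384; 800; 672; 284; 60; 5]%positive s) => //.
by expand_partition; cbn [cert_sum posr predn]; ring.
Qed.

Lemma partition_gap_10_2 (s : R) : 0 < s -> s != 1 ->
  2 ^+ 10 * partition 10 2 s ^+ 2 < (4 * 'C(10, 2)%:R) ^+ 2 * (1 + s ^+ 2) ^+ 10.
Proof.
move=> s0 s1; apply: (lt_of_cert 10 16
  [:: 1290240; 6665216; 14027776; 16154240; 11462528; 5289760; 1608128;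
     312788; 35380; 1769]%positive s) => //.
by expand_partition; cbn [cert_sum posr predn]; ring.
Qed.

Lemma partition_gap_13_3 (s : R) : 0 < s -> s != 1 ->
  2 ^+ 13 * partition 13 3 s ^+ 2 < (4 * 'C(13, 3)%:R) ^+ 2 * (1 + s ^+ 2) ^+ 13.
Proof.
move=> s0 s1; apply: (lt_of_cert 13 64
  [:: 196511744; 1207230464; 3234908160; 5072156160; 5252500736;
     3823292928; 2019959040; 784021728; 222490800; 45086448; 6196280;
     518362; 19937]%positive s) => //.
by expand_partition; cbn [cert_sum posr predn]; ring.
Qed.

Lemma partition_gap_14_3 (s : R) : 0 < s -> s != 1 ->
  2 ^+ 14 * partition 14 3 s ^+ 2 < (4 * 'C(14, 3)%:R) ^+ 2 * (1 + s ^+ 2) ^+ 14.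
Proof.
move=> s0 s1; apply: (lt_of_cert 14 256
  [:: 8945664; 398680064; 1906728960; 4142212096; 5405807616; 4767821568;
     3013383168; 1404371136; 487080000; 124833808; 23049312; 2907788;
     224700; 8025]%positive s) => //.
by expand_partition; cbn [cert_sum posr predn]; ring.
Qed.

Lemma partition_gap_17_4 (s : R) : 0 < s -> s != 1 ->
  2 ^+ 17 * partition 17 4 s ^+ 2 < (4 * 'C(17, 4)%:R) ^+ 2 * (1 + s ^+ 2) ^+ 17.
Proof.
move=> s0 s1; apply: (lt_of_cert 17 256
  [:: 22518988800; 319731793920; 1517401374720; 3830344286208;
     6209491132416; 7116976029696; 6089559367680; 4015222705152;
     2076252454400; 848199891968; 273466119680; 68931424640; 13323946688;
     1909409600; 191297312; 11967218; 351977]%positive s) => //.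
by expand_partition; cbn [cert_sum posr predn]; ring.
Qed.

End Cases.

Theorem lemma4p4 (R : realType) (d p : nat) :
  ((d = 6 /\ p = 1) \/ (d = 10 /\ p = 2) \/ (d = 13 /\ p = 3) \/
   (d = 14 /\ p = 3) \/ (d = 17 /\ p = 4))%N ->
  [/\ @inK R p (zstar R d p),
      (forall w : kpoint R p, @inK R p w -> w <> zstar R d p ->
         @phi R d p w < @phi R d p (zstar R d p)) &
      @in_interior_K R p (zstar R d p)].
Proof.
case=> [[-> ->]|[[-> ->]|[[-> ->]|[[-> ->]|[-> ->]]]]]; apply: phi_argmax => //;
  try by expand_partition; lra.
- exact: partition_gap_6_1.
- exact: partition_gap_10_2.
- exact: partition_gap_13_3.
- exact: partition_gap_14_3.
- exact: partition_gap_17_4.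
Qed.
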